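(* Let $W\subset S^1$ with $W\cong\{0,\tfrac14,\tfrac34,a\}$ for some $a\in S^1\setminus\{0,\tfrac14,\tfrac12,\tfrac34\}$. Then $P(W)$ holds.
   Context: Identify $S^1$ with $\mathbb{R}/\mathbb{Z}$. The group $O(2)$ acts on $S^1$ by translations $x\mapsto x+a$ and reflections $x\mapsto -x+2a$. A coloring $c:S^1\to\{R,B\}$ is distinguishing if no non-identity $\gamma\in O(2)$ satisfies $c\circ\gamma=c$. For $W\subset S^1$ with trivial pointwise stabilizer in $O(2)$, $P(W)$ holds if every precoloring $c:S^1\setminus W\to\{R,B\}$ extends to a distinguishing coloring of $S^1$. Write $W\cong W'$ if $W'=\gamma(W)$ for some $\gamma\in O(2)$. *)

(* S^1 = R/Z modelled by reals modulo integers. *)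
From Stdlib Require Import Reals.
Open Scope R_scope.

Definition eqS1 (x y : R) : Prop := exists k : Z, x - y = IZR k.

Inductive O2 : Type :=
| Transl : R -> O2
| Refl : R -> O2.

Definition act (g : O2) (x : R) : R :=
  match g with
  | Transl a => x + a
  | Refl a => - x + 2 * a
  end.

Definition is_id (g : O2) : Prop := forall x : R, eqS1 (act g x) x.

Definition on_S1 (c : R -> bool) : Prop := forall x y : R, eqS1 x y -> c x = c y.

Definition distinguishing (c : R -> bool) : Prop :=
  forall g : O2, (forall x : R, c (act g x) = c x) -> is_id g.

Definition trivial_pointwise_stab (W : R -> Prop) : Prop :=
  forall g : O2, (forall x : R, W x -> eqS1 (act g x) x) -> is_id g.

(* P(W): every precoloring of S^1 \ W extends to a distinguishing coloring.
   A precoloring is given as a coloring c0 of S^1 whose values on W are ignored. *)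
Definition P (W : R -> Prop) : Prop :=
  forall c0 : R -> bool, on_S1 c0 ->
    exists c : R -> bool, on_S1 c /\ distinguishing c /\
      (forall x : R, ~ W x -> c x = c0 x).

Definition congr_sets (W W' : R -> Prop) : Prop :=
  exists g : O2, forall y : R, W' y <-> exists x : R, W x /\ eqS1 (act g x) y.

Definition W0 (a : R) (x : R) : Prop :=
  eqS1 x 0 \/ eqS1 x (1/4) \/ eqS1 x (3/4) \/ eqS1 x a.

(* Choose the colors of 0 and a opposite to those of 1/2 and -a; this rules out the half turn
   and the reflections fixing 0 or swapping 0 and 1/2.  Among the three colorings A, B, E that
   color (1/4, 3/4) as (f, f), (t, f), (f, t), the colorings B and E differ from A at the single
   points 1/4 and 3/4.  If Y differs from X exactly at w and Y o g = Y with g w <> w, then X o g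
   differs from X exactly on the two points {w, g^-1 w}.  A translation symmetry of X must
   preserve this set, which forces it to be the half turn; so if none of A, B, E is
   distinguishing, they are symmetric under reflections r_b, r_b1, r_b2 only.  Then A is shifted
   by b - b1 and by b - b2 with explicit two-point defect sets, and comparing the two orders of
   applying both shifts at the four defect points leaves, modulo 1, only the case b2 - b1 = 1/2,
   where the two shifts differ by the half turn and A 0 = A (1/2) follows. *)

From Stdlib Require Import Reals Lra Lia ZArith Classical ClassicalEpsilon.
Open Scope R_scope.

Lemma eqS1_refl x : eqS1 x x.
Proof. exists 0%Z; simpl; ring. Qed.

Lemma eqS1_eq x y : x = y -> eqS1 x y.
Proof. intros ->; apply eqS1_refl. Qed.

Lemma eqS1_shift_iff x y x' y' (k : Z) :
  x - y = x' - y' + IZR k -> (eqS1 x y <-> eqS1 x' y').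
Proof.
  intros E; split; intros [m Hm].
  - exists (m - k)%Z; rewrite minus_IZR; lra.
  - exists (m + k)%Z; rewrite plus_IZR; lra.
Qed.

Lemma eqS1_shift_iff_opp x y x' y' (k : Z) :
  x - y = - (x' - y') + IZR k -> (eqS1 x y <-> eqS1 x' y').
Proof. intros E; split; intros [m Hm]; exists (k - m)%Z; rewrite minus_IZR; lra. Qed.

Lemma eqS1_sym x y : eqS1 x y -> eqS1 y x.
Proof. apply (eqS1_shift_iff_opp _ _ _ _ 0); simpl; ring. Qed.

Lemma eqS1_trans x y z : eqS1 x y -> eqS1 y z -> eqS1 x z.
Proof. intros [k Hk] [m Hm]; exists (k + m)%Z; rewrite plus_IZR; lra. Qed.

Lemma eqS1_add {x y x' y'} : eqS1 x y -> eqS1 x' y' -> eqS1 (x + x') (y + y').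
Proof. intros [k Hk] [m Hm]; exists (k + m)%Z; rewrite plus_IZR; lra. Qed.

Lemma eqS1_sub {x y x' y'} : eqS1 x y -> eqS1 x' y' -> eqS1 (x - x') (y - y').
Proof. intros [k Hk] [m Hm]; exists (k - m)%Z; rewrite minus_IZR; lra. Qed.

(* [eqS1_congr] proves [eqS1 x y <-> eqS1 x' y'] when x - y = +-(x' - y') + k, k an integer
   with |k| <= 2. *)
Ltac eqS1_congr_by k :=
  first [ apply (eqS1_shift_iff _ _ _ _ k); simpl; lra
        | apply (eqS1_shift_iff_opp _ _ _ _ k); simpl; lra ].

Ltac eqS1_congr :=
  first [ eqS1_congr_by 0%Z | eqS1_congr_by 1%Z | eqS1_congr_by (-1)%Z
        | eqS1_congr_by 2%Z | eqS1_congr_by (-2)%Z ].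

Ltac eqS1_from H :=
  lazymatch type of H with eqS1 ?x' ?y' =>
  lazymatch goal with |- eqS1 ?x ?y =>
    apply (proj2 (ltac:(eqS1_congr) : eqS1 x y <-> eqS1 x' y') H) end end.

Lemma not_eqS1_frac x y r (k : Z) : x - y = r + IZR k -> 0 < r < 1 -> ~ eqS1 x y.
Proof.
  intros E [Hr0 Hr1] [m Hm].
  assert (Hlo : IZR k < IZR m) by lra.
  assert (Hhi : IZR m < IZR (k + 1)) by (rewrite plus_IZR; simpl; lra).
  apply lt_IZR in Hlo; apply lt_IZR in Hhi; lia.
Qed.

Lemma eqS1_double_0 x : eqS1 (2 * x) 0 -> eqS1 x 0 \/ eqS1 x (1/2).
Proof.
  intros [k Hk]; destruct (Zeven_odd_dec k) as [He | Ho].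
  - destruct (Zeven_ex _ He) as [m ->]; left; exists m.
    rewrite mult_IZR in Hk; simpl in Hk; lra.
  - destruct (Zodd_ex _ Ho) as [m ->]; right; exists m.
    rewrite plus_IZR, mult_IZR in Hk; simpl in Hk; lra.
Qed.

Lemma half_neq_0 : ~ eqS1 (1/2) 0.
Proof. apply (not_eqS1_frac _ _ (1/2) 0); simpl; lra. Qed.

Lemma quarter_neq_three_quarters : ~ eqS1 (1/4) (3/4).
Proof. apply (not_eqS1_frac _ _ (1/2) (-1)); simpl; lra. Qed.

Definition O2_inv (g : O2) : O2 :=
  match g with Transl t => Transl (- t) | Refl c => Refl c end.

Definition O2_mul (g h : O2) : O2 :=
  match g, h with
  | Transl s, Transl t => Transl (s + t)
  | Transl s, Refl c => Refl (c + s / 2)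
  | Refl c, Transl s => Refl (c - s / 2)
  | Refl c, Refl d => Transl (2 * c - 2 * d)
  end.

Lemma act_mul g h x : act (O2_mul g h) x = act g (act h x).
Proof. destruct g, h; simpl; field. Qed.

Lemma act_invK g x : act (O2_inv g) (act g x) = x.
Proof. destruct g; simpl; ring. Qed.

Lemma act_Kinv g x : act g (act (O2_inv g) x) = x.
Proof. destruct g; simpl; ring. Qed.

Lemma act_eqS1 g x y : eqS1 x y -> eqS1 (act g x) (act g y).
Proof. intros H; destruct g; simpl; eqS1_from H. Qed.

Lemma act_eqS1_inv g x w : eqS1 (act g x) w <-> eqS1 x (act (O2_inv g) w).
Proof.
  split; intros H.
  - rewrite <- (act_invK g x); exact (act_eqS1 _ _ _ H).
  - rewrite <- (act_Kinv g w); exact (act_eqS1 _ _ _ H).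
Qed.

Lemma Transl_is_id t : eqS1 t 0 -> is_id (Transl t).
Proof. intros H x; simpl; eqS1_from H. Qed.

Lemma P_congr_sets W W' : congr_sets W W' -> P W -> P W'.
Proof.
  intros [g HW] PW c0 Hc0.
  assert (Hc1 : on_S1 (fun x => c0 (act g x))) by (intros x y H; apply Hc0, act_eqS1, H).
  destruct (PW _ Hc1) as [c [Hc [Hd Hext]]].
  exists (fun y => c (act (O2_inv g) y)); repeat split.
  - intros x y H; apply Hc, act_eqS1, H.
  - intros h Hh y.
    assert (Hid : is_id (O2_mul (O2_inv g) (O2_mul h g))).
    { apply Hd; intros x; rewrite !act_mul, (Hh (act g x)), act_invK; reflexivity. }
    specialize (Hid (act (O2_inv g) y)); rewrite !act_mul, act_Kinv in Hid.
    apply (act_eqS1 g) in Hid; rewrite !act_Kinv in Hid; exact Hid.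
  - intros y Hy; rewrite Hext, act_Kinv; [reflexivity |].
    intros HWy; apply Hy, HW; exists (act (O2_inv g) y); split; [exact HWy | rewrite act_Kinv; apply eqS1_refl].
Qed.

Definition is_symmetry (X : R -> bool) (g : O2) : Prop := forall x, X (act g x) = X x.

Lemma not_distinguishing_symmetry X :
  ~ distinguishing X -> exists g, is_symmetry X g /\ ~ is_id g.
Proof.
  intros H; apply not_all_ex_not in H as [g Hg].
  exists g; exact (imply_to_and _ _ Hg).
Qed.

Definition separates (a : R) (X : R -> bool) : Prop := X 0 <> X (1/2) /\ X a <> X (- a).

Section SeparatingSymmetries.

Variables (a : R) (X : R -> bool).
Hypotheses (HX : on_S1 X) (Hsep : separates a X).

Lemma separates_translation t : is_symmetry X (Transl t) -> ~ eqS1 t (1/2).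
Proof.
  intros Ht H; apply (proj1 Hsep); rewrite <- (Ht 0); apply HX; simpl; eqS1_from H.
Qed.

Lemma separates_reflection c : is_symmetry X (Refl c) -> ~ eqS1 (2 * c) 0 /\ ~ eqS1 (2 * c) (1/2).
Proof.
  intros Hc; split; intros H.
  - apply (proj2 Hsep); rewrite <- (Hc a); apply HX; simpl; eqS1_from H.
  - apply (proj1 Hsep); rewrite <- (Hc 0); apply HX; simpl; eqS1_from H.
Qed.

Lemma separates_moves_quarter g w :
  is_symmetry X g -> ~ is_id g -> eqS1 (2 * w) (1/2) -> ~ eqS1 (act g w) w.
Proof.
  intros Hg Hid Hw H; destruct g as [t | c]; simpl in H.
  - apply Hid, Transl_is_id; eqS1_from H.
  - apply (separates_reflection c Hg); eqS1_from (eqS1_add H Hw).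
Qed.

End SeparatingSymmetries.

Definition differ_only_at (X Y : R -> bool) (w : R) : Prop := forall x, X x <> Y x <-> eqS1 x w.

Lemma differ_only_at_sym X Y w : differ_only_at X Y w -> differ_only_at Y X w.
Proof. intros D x; rewrite <- (D x); split; intros H E; apply H; congruence. Qed.

Definition shift_defect (X : R -> bool) (u : R) (S : R -> Prop) : Prop :=
  forall x, X (x + u) <> X x <-> S x.

Section OnePointChange.

Variables (X Y : R -> bool) (w : R).
Hypothesis Hdiff : differ_only_at X Y w.

(* As Y o g = Y, X o g differs from X exactly where one of X, X o g differs from Y. *)
Lemma differ_only_at_defect g :
  is_symmetry Y g -> ~ eqS1 (act g w) w ->
  forall x, X (act g x) <> X x <-> eqS1 x w \/ eqS1 x (act (O2_inv g) w).
Proof.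
  intros Hg Hw x.
  assert (Hx := Hdiff x); assert (Hgx := Hdiff (act g x)); rewrite act_eqS1_inv in Hgx.
  assert (Hexcl : eqS1 x w -> ~ eqS1 x (act (O2_inv g) w)).
  { intros H1 H2; apply Hw, act_eqS1_inv, (eqS1_trans _ x); [apply eqS1_sym |]; assumption. }
  specialize (Hg x).
  destruct (X x), (Y x), (X (act g x)), (Y (act g x)); intuition congruence.
Qed.

(* The translation by t preserves the defect set {w, g^-1 w} of g, hence swaps its points. *)
Lemma differ_only_at_translation g t :
  is_symmetry Y g -> ~ eqS1 (act g w) w ->
  is_symmetry X (Transl t) -> ~ eqS1 t 0 -> eqS1 (2 * t) 0.
Proof.
  intros Hg Hw Ht Ht0.
  assert (Ht' : forall y, X (y + t) = X y) by exact Ht.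
  assert (Hcomm : forall x, X (act g x) <> X x -> X (act g (x + t)) <> X (x + t)).
  { intros x Hx; destruct g as [s | c]; simpl in *.
    - replace (x + t + s) with (x + s + t) by ring; rewrite !Ht'; exact Hx.
    - replace (- x + 2 * c) with (- (x + t) + 2 * c + t) in Hx by ring.
      rewrite Ht', <- (Ht' x) in Hx; exact Hx. }
  assert (D := differ_only_at_defect g Hg Hw).
  set (p := act (O2_inv g) w) in D.
  assert (Hshift : forall x, eqS1 x w \/ eqS1 x p -> eqS1 (x + t) w \/ eqS1 (x + t) p)
    by (intros x; rewrite <- !D; apply Hcomm).
  assert (Ht0' : forall x, ~ eqS1 (x + t) x) by (intros x H; apply Ht0; eqS1_from H).
  destruct (Hshift w (or_introl (eqS1_refl w))) as [H | Hwp]; [now destruct (Ht0' w) |].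
  destruct (Hshift p (or_intror (eqS1_refl p))) as [Hpw | H]; [| now destruct (Ht0' p)].
  eqS1_from (eqS1_add Hwp Hpw).
Qed.

Lemma differ_only_at_reflections c c' :
  is_symmetry X (Refl c) -> is_symmetry Y (Refl c') -> ~ eqS1 (act (Refl c') w) w ->
  shift_defect X (2 * c - 2 * c') (fun x => eqS1 x w \/ eqS1 x (2 * c' - w)).
Proof.
  intros Hc Hc' Hw x.
  replace (x + (2 * c - 2 * c')) with (act (Refl c) (act (Refl c') x)) by (simpl; ring).
  rewrite Hc, (differ_only_at_defect _ Hc' Hw); simpl.
  replace (- w + 2 * c') with (2 * c' - w) by ring; reflexivity.
Qed.

End OnePointChange.

Definition xor_prop (P Q : Prop) : Prop := (P \/ Q) /\ ~ (P /\ Q).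

Section ShiftDefects.

Variables (X : R -> bool) (u v : R) (S T : R -> Prop).
Hypotheses (HX : on_S1 X) (HS : shift_defect X u S) (HT : shift_defect X v T).

(* Compare X (x + v + u) with X x along the paths through x + v and through x + u. *)
Lemma shift_defect_comm x :
  ((S x <-> T x) -> (S (x + v) <-> T (x + u))) /\
  ((S x <-> ~ T x) -> xor_prop (S (x + v)) (T (x + u))).
Proof.
  assert (E : X (x + v + u) = X (x + u + v)) by (apply HX, eqS1_eq; ring).
  assert (H1 := HS x); assert (H2 := HS (x + v)); assert (H3 := HT x); assert (H4 := HT (x + u)).
  rewrite E in H2; unfold xor_prop.
  destruct (X x), (X (x + u)), (X (x + v)), (X (x + u + v)); intuition congruence.
Qed.

Lemma shift_defect_unique : eqS1 u v -> forall x, S x <-> T x.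
Proof.
  intros Huv x; rewrite <- (HS x), <- (HT x).
  rewrite (HX (x + u) (x + v)); [reflexivity | eqS1_from Huv].
Qed.

Lemma shift_defect_half_apart :
  X 0 <> X (1/2) -> eqS1 (u - v) (1/2) -> ~ (S (- v) <-> T (- v)).
Proof.
  intros H01 Huv HST.
  assert (E0 : X (- v + v) = X 0) by (apply HX, eqS1_eq; ring).
  assert (Eh : X (- v + u) = X (1/2)) by (apply HX; eqS1_from Huv).
  assert (H1 := HS (- v)); assert (H2 := HT (- v)); rewrite E0 in H2; rewrite Eh in H1.
  destruct (X (- v)), (X 0), (X (1/2)); intuition congruence.
Qed.

End ShiftDefects.

Tactic Notation "eqS1_rewrite" constr(lhs) "into" constr(rhs) "in" hyp(C) :=
  rewrite (ltac:(eqS1_congr) : lhs <-> rhs) in C.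

(* The atoms [eqS1 x y] are generalized first so that tauto does not look inside them. *)
Ltac eqS1_tauto :=
  repeat match goal with H : context [eqS1 ?x ?y] |- _ => revert H end;
  repeat match goal with |- context [eqS1 ?x ?y] => generalize (eqS1 x y); intro end;
  tauto.

Section QuarterDefects.

Variables (A : R -> bool) (b b1 b2 : R).
Hypotheses (HA : on_S1 A) (HA01 : A 0 <> A (1/2)).
Hypotheses (Hb0 : ~ eqS1 b 0) (Hbh : ~ eqS1 b (1/2)).
Hypotheses (Hb10 : ~ eqS1 b1 0) (Hb1h : ~ eqS1 b1 (1/2)).
Hypotheses (Hb20 : ~ eqS1 b2 0) (Hb2h : ~ eqS1 b2 (1/2)).
Hypothesis Hdef1 : shift_defect A (b - b1) (fun x => eqS1 x (1/4) \/ eqS1 x (b1 - 1/4)).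
Hypothesis Hdef2 : shift_defect A (b - b2) (fun x => eqS1 x (3/4) \/ eqS1 x (b2 - 3/4)).

(* The lemmas below evaluate [shift_defect_comm] at the four defect points 1/4, 3/4,
   b1 - 1/4 and b2 - 3/4, rewriting every point comparison as a condition on b, b1, b2. *)
Let comm := shift_defect_comm A _ _ _ _ HA Hdef1 Hdef2.

Lemma quarter_defects_distinct : ~ eqS1 b1 b2.
Proof.
  intros h.
  assert (U := shift_defect_unique A _ _ _ _ HA Hdef1 Hdef2 ltac:(eqS1_from h) (1/4)); cbv beta in U.
  destruct (proj1 U (or_introl (eqS1_refl _))) as [h' | h'].
  - exact (quarter_neq_three_quarters h').
  - apply Hb20; eqS1_from h'.
Qed.

Lemma quarter_defects_at_quarter :
  xor_prop (eqS1 (b - b2) 0 \/ eqS1 (b1 + b2 - b) (1/2)) (eqS1 (b - b1) (1/2) \/ eqS1 (b1 + b2 - b) 0).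
Proof.
  assert (C := proj2 (comm (1/4))); cbv beta in C; unfold xor_prop in C.
  eqS1_rewrite (eqS1 (1/4 + (b - b2)) (1/4)) into (eqS1 (b - b2) 0) in C.
  eqS1_rewrite (eqS1 (1/4 + (b - b2)) (b1 - 1/4)) into (eqS1 (b1 + b2 - b) (1/2)) in C.
  eqS1_rewrite (eqS1 (1/4 + (b - b1)) (3/4)) into (eqS1 (b - b1) (1/2)) in C.
  eqS1_rewrite (eqS1 (1/4 + (b - b1)) (b2 - 3/4)) into (eqS1 (b1 + b2 - b) 0) in C.
  apply C; split; [intros _ [h | h] | intros _; left; apply eqS1_refl].
  - exact (quarter_neq_three_quarters h).
  - apply Hb20; eqS1_from h.
Qed.

Lemma quarter_defects_at_three_quarters :
  xor_prop (eqS1 (b - b2) (1/2) \/ eqS1 (b1 + b2 - b) 0) (eqS1 (b - b1) 0 \/ eqS1 (b1 + b2 - b) (1/2)).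
Proof.
  assert (C := proj2 (comm (3/4))); cbv beta in C; unfold xor_prop in C.
  eqS1_rewrite (eqS1 (3/4 + (b - b2)) (1/4)) into (eqS1 (b - b2) (1/2)) in C.
  eqS1_rewrite (eqS1 (3/4 + (b - b2)) (b1 - 1/4)) into (eqS1 (b1 + b2 - b) 0) in C.
  eqS1_rewrite (eqS1 (3/4 + (b - b1)) (3/4)) into (eqS1 (b - b1) 0) in C.
  eqS1_rewrite (eqS1 (3/4 + (b - b1)) (b2 - 3/4)) into (eqS1 (b1 + b2 - b) (1/2)) in C.
  apply C; split; [intros [h | h] | intros HT; exfalso; apply HT; left; apply eqS1_refl].
  - destruct quarter_neq_three_quarters; eqS1_from h.
  - destruct Hb10; eqS1_from h.
Qed.

Lemma quarter_defects_at_b1 :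
  (eqS1 (b2 - b1) (1/2) -> (eqS1 (b1 + b - b2) (1/2) \/ eqS1 (b - b2) 0 <-> eqS1 (b - b2) (1/2))) /\
  (~ eqS1 (b2 - b1) (1/2) -> xor_prop (eqS1 (b1 + b - b2) (1/2) \/ eqS1 (b - b2) 0) (eqS1 (b - b2) (1/2))).
Proof.
  assert (C := comm (b1 - 1/4)); cbv beta in C; unfold xor_prop in C.
  eqS1_rewrite (eqS1 (b1 - 1/4 + (b - b2)) (1/4)) into (eqS1 (b1 + b - b2) (1/2)) in C.
  eqS1_rewrite (eqS1 (b1 - 1/4 + (b - b2)) (b1 - 1/4)) into (eqS1 (b - b2) 0) in C.
  eqS1_rewrite (eqS1 (b1 - 1/4 + (b - b1)) (b2 - 3/4)) into (eqS1 (b - b2) (1/2)) in C.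
  eqS1_rewrite (eqS1 (b1 - 1/4) (b2 - 3/4)) into (eqS1 (b2 - b1) (1/2)) in C.
  assert (N1 : ~ eqS1 (b1 - 1/4) (3/4)) by (intros h; apply Hb10; eqS1_from h).
  assert (N2 : ~ eqS1 (b1 - 1/4 + (b - b1)) (3/4)) by (intros h; apply Hb0; eqS1_from h).
  split; intros hde; [apply proj1 in C | apply proj2 in C].
  - assert (C' := C ltac:(split; intros _; right; [exact hde | apply eqS1_refl])).
    clear - C' N2; eqS1_tauto.
  - assert (C' := C ltac:(split; [intros _ [h | h]; auto | intros _; right; apply eqS1_refl])).
    clear - C' N2; unfold xor_prop; eqS1_tauto.
Qed.

Lemma quarter_defects_at_b2 :
  (eqS1 (b2 - b1) (1/2) -> (eqS1 (b - b1) (1/2) <-> eqS1 (b2 + b - b1) (1/2) \/ eqS1 (b - b1) 0)) /\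
  (~ eqS1 (b2 - b1) (1/2) -> xor_prop (eqS1 (b - b1) (1/2)) (eqS1 (b2 + b - b1) (1/2) \/ eqS1 (b - b1) 0)).
Proof.
  assert (C := comm (b2 - 3/4)); cbv beta in C; unfold xor_prop in C.
  eqS1_rewrite (eqS1 (b2 - 3/4 + (b - b2)) (b1 - 1/4)) into (eqS1 (b - b1) (1/2)) in C.
  eqS1_rewrite (eqS1 (b2 - 3/4 + (b - b1)) (3/4)) into (eqS1 (b2 + b - b1) (1/2)) in C.
  eqS1_rewrite (eqS1 (b2 - 3/4 + (b - b1)) (b2 - 3/4)) into (eqS1 (b - b1) 0) in C.
  eqS1_rewrite (eqS1 (b2 - 3/4) (b1 - 1/4)) into (eqS1 (b2 - b1) (1/2)) in C.
  assert (N1 : ~ eqS1 (b2 - 3/4) (1/4)) by (intros h; apply Hb20; eqS1_from h).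
  assert (N2 : ~ eqS1 (b2 - 3/4 + (b - b2)) (1/4)) by (intros h; apply Hb0; eqS1_from h).
  split; intros hde; [apply proj1 in C | apply proj2 in C].
  - assert (C' := C ltac:(split; intros _; right; [apply eqS1_refl | exact hde])).
    clear - C' N2; eqS1_tauto.
  - assert (C' := C ltac:(split; [intros [h | h] HT; auto | intros HT; exfalso; apply HT; right; apply eqS1_refl])).
    clear - C' N2; unfold xor_prop; eqS1_tauto.
Qed.

Lemma quarter_defects_half_apart : eqS1 (b2 - b1) (1/2).
Proof.
  apply NNPP; intros hde.
  assert (N12 := quarter_defects_distinct).
  assert (~ (eqS1 (b - b1) 0 /\ eqS1 (b - b1) (1/2)))
    by (intros [h h']; apply half_neq_0; eqS1_from (eqS1_sub h' h)).
  assert (~ (eqS1 (b - b2) 0 /\ eqS1 (b - b2) (1/2)))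
    by (intros [h h']; apply half_neq_0; eqS1_from (eqS1_sub h' h)).
  assert (~ (eqS1 (b - b1) 0 /\ eqS1 (b - b2) 0))
    by (intros [h h']; apply N12; eqS1_from (eqS1_sub h' h)).
  assert (~ (eqS1 (b - b1) (1/2) /\ eqS1 (b - b2) (1/2)))
    by (intros [h h']; apply N12; eqS1_from (eqS1_sub h' h)).
  assert (~ (eqS1 (b1 + b2 - b) 0 /\ eqS1 (b - b1) (1/2)))
    by (intros [h h']; apply Hb2h; eqS1_from (eqS1_add h h')).
  assert (~ (eqS1 (b1 + b2 - b) 0 /\ eqS1 (b - b2) (1/2)))
    by (intros [h h']; apply Hb1h; eqS1_from (eqS1_add h h')).
  assert (~ (eqS1 (b1 + b2 - b) (1/2) /\ eqS1 (b - b2) 0))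
    by (intros [h h']; apply Hb1h; eqS1_from (eqS1_add h h')).
  assert (~ (eqS1 (b1 + b2 - b) (1/2) /\ eqS1 (b1 + b - b2) (1/2))).
  { intros [h h']; assert (Hsum := eqS1_add h h').
    destruct (eqS1_double_0 b1 ltac:(eqS1_from Hsum)); contradiction. }
  assert (~ (eqS1 (b1 + b - b2) (1/2) /\ eqS1 (b2 + b - b1) (1/2))).
  { intros [h h']; assert (Hdiff := eqS1_sub h' h).
    destruct (eqS1_double_0 (b2 - b1) ltac:(eqS1_from Hdiff)) as [h0 | h0]; [apply N12 | apply hde];
      eqS1_from h0. }
  assert (E1 := quarter_defects_at_quarter); assert (E2 := quarter_defects_at_three_quarters).
  assert (E3 := proj2 quarter_defects_at_b1 hde); assert (E4 := proj2 quarter_defects_at_b2 hde).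
  clear comm Hdef1 Hdef2 HA HA01 Hb0 Hbh Hb10 Hb1h Hb20 Hb2h N12 hde.
  unfold xor_prop in *; eqS1_tauto.
Qed.

Lemma quarter_defects_sum : eqS1 (b1 + b2 - b) 0 \/ eqS1 (b1 + b2 - b) (1/2).
Proof.
  assert (hde := quarter_defects_half_apart).
  assert (E2 := quarter_defects_at_three_quarters).
  assert (E3 := proj1 quarter_defects_at_b1 hde); assert (E4 := proj1 quarter_defects_at_b2 hde).
  assert (~ (eqS1 (b - b1) 0 /\ eqS1 (b - b1) (1/2)))
    by (intros [h h']; apply half_neq_0; eqS1_from (eqS1_sub h' h)).
  assert (~ (eqS1 (b - b2) 0 /\ eqS1 (b - b2) (1/2)))
    by (intros [h h']; apply half_neq_0; eqS1_from (eqS1_sub h' h)).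
  assert (~ eqS1 (b1 + b - b2) (1/2)) by (intros h; apply Hb0; eqS1_from (eqS1_add hde h)).
  assert (~ eqS1 (b2 + b - b1) (1/2)) by (intros h; apply Hb0; eqS1_from (eqS1_sub h hde)).
  clear comm Hdef1 Hdef2 HA HA01 Hb0 Hbh Hb10 Hb1h Hb20 Hb2h hde.
  unfold xor_prop in *; eqS1_tauto.
Qed.

Lemma quarter_defects_absurd : False.
Proof.
  assert (Hde := quarter_defects_half_apart); assert (Hs := quarter_defects_sum).
  assert (Hb2 : eqS1 (2 * b2 - b) (1/2) \/ eqS1 (2 * b2 - b) 0)
    by (destruct Hs as [h | h]; [left | right]; eqS1_from (eqS1_add h Hde)).
  assert (Hv : forall w, eqS1 (2 * w) (1/2) -> ~ eqS1 (- (b - b2)) w).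
  { intros w Hw h; assert (H := eqS1_trans _ _ (1/2) (eqS1_add h h) ltac:(eqS1_from Hw)).
    destruct Hb2 as [h' | h']; [apply Hb0 | apply Hbh]; eqS1_from (eqS1_sub h' H). }
  assert (Hq : eqS1 (b1 - 1/4) (b2 - 3/4)) by eqS1_from Hde.
  apply (shift_defect_half_apart A _ _ _ _ HA Hdef1 Hdef2 HA01 ltac:(eqS1_from Hde)); cbv beta.
  split; intros [h | h].
  - destruct (Hv (1/4) ltac:(apply eqS1_eq; field) h).
  - right; exact (eqS1_trans _ _ _ h Hq).
  - destruct (Hv (3/4) ltac:(exists 1%Z; simpl; lra) h).
  - right; exact (eqS1_trans _ _ _ h (eqS1_sym _ _ Hq)).
Qed.

End QuarterDefects.

Lemma quarter_change_translation_absurd a X Y w t g :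
  on_S1 X -> on_S1 Y -> separates a X -> separates a Y -> eqS1 (2 * w) (1/2) ->
  differ_only_at X Y w -> is_symmetry X (Transl t) -> ~ is_id (Transl t) ->
  is_symmetry Y g -> ~ is_id g -> False.
Proof.
  intros HX HY sX sY Hw D Ht It Hg Ig.
  assert (Ht0 : ~ eqS1 t 0) by (intros h; apply It, Transl_is_id, h).
  assert (Hgw := separates_moves_quarter a Y HY sY g w Hg Ig Hw).
  destruct (eqS1_double_0 t (differ_only_at_translation X Y w D g t Hg Hgw Ht Ht0)) as [h | h].
  - exact (Ht0 h).
  - exact (separates_translation a X HX sX t Ht h).
Qed.

Lemma quarter_flips_distinguishing a (A B E : R -> bool) :
  on_S1 A -> on_S1 B -> on_S1 E -> separates a A -> separates a B -> separates a E ->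
  differ_only_at A B (1/4) -> differ_only_at A E (3/4) ->
  distinguishing A \/ distinguishing B \/ distinguishing E.
Proof.
  intros HA HB HE sA sB sE DB DE.
  assert (Hq1 : eqS1 (2 * (1/4)) (1/2)) by (apply eqS1_eq; field).
  assert (Hq3 : eqS1 (2 * (3/4)) (1/2)) by (exists 1%Z; simpl; lra).
  destruct (classic (distinguishing A)) as [? | nA]; [now left |].
  destruct (classic (distinguishing B)) as [? | nB]; [now right; left |].
  destruct (classic (distinguishing E)) as [? | nE]; [now right; right | exfalso].
  destruct (not_distinguishing_symmetry A nA) as [gA [SA IA]].
  destruct (not_distinguishing_symmetry B nB) as [gB [SB IB]].
  destruct (not_distinguishing_symmetry E nE) as [gE [SE IE]].
  destruct gA as [t | c]; [exact (quarter_change_translation_absurd a A B _ t gB HA HB sA sB Hq1 DB SA IA SB IB) |].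
  destruct gB as [t | c1].
  { exact (quarter_change_translation_absurd a B A _ t _ HB HA sB sA Hq1 (differ_only_at_sym _ _ _ DB) SB IB SA IA). }
  destruct gE as [t | c2].
  { exact (quarter_change_translation_absurd a E A _ t _ HE HA sE sA Hq3 (differ_only_at_sym _ _ _ DE) SE IE SA IA). }
  destruct (separates_reflection a A HA sA c SA), (separates_reflection a B HB sB c1 SB),
    (separates_reflection a E HE sE c2 SE).
  apply (quarter_defects_absurd A (2 * c) (2 * c1) (2 * c2) HA (proj1 sA)); try assumption.
  - exact (differ_only_at_reflections A B _ DB c c1 SA SB (separates_moves_quarter a B HB sB _ _ SB IB Hq1)).
  - exact (differ_only_at_reflections A E _ DE c c2 SA SE (separates_moves_quarter a E HE sE _ _ SE IE Hq3)).
Qed.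

Definition recolor (c : R -> bool) (w : R) (v : bool) (x : R) : bool :=
  if excluded_middle_informative (eqS1 x w) then v else c x.

Lemma recolor_at c w v x : eqS1 x w -> recolor c w v x = v.
Proof. unfold recolor; destruct (excluded_middle_informative (eqS1 x w)); tauto. Qed.

Lemma recolor_off c w v x : ~ eqS1 x w -> recolor c w v x = c x.
Proof. unfold recolor; destruct (excluded_middle_informative (eqS1 x w)); tauto. Qed.

Lemma recolor_on_S1 c w v : on_S1 c -> on_S1 (recolor c w v).
Proof.
  intros Hc x y Hxy.
  destruct (classic (eqS1 x w)) as [h | h].
  - rewrite !recolor_at; [reflexivity | exact (eqS1_trans _ _ _ (eqS1_sym _ _ Hxy) h) | exact h].
  - rewrite !recolor_off; [exact (Hc x y Hxy) | intros h'; exact (h (eqS1_trans _ _ _ Hxy h')) | exact h].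
Qed.

Lemma differ_only_at_recolor c w v : differ_only_at (recolor c w v) (recolor c w (negb v)) w.
Proof.
  intros x; destruct (classic (eqS1 x w)) as [h | h].
  - rewrite !recolor_at by exact h; destruct v; intuition discriminate.
  - rewrite !recolor_off by exact h; tauto.
Qed.

Lemma differ_only_at_recolor_other c c' w w' v :
  differ_only_at c c' w -> ~ eqS1 w w' -> differ_only_at (recolor c w' v) (recolor c' w' v) w.
Proof.
  intros D Hww x; destruct (classic (eqS1 x w')) as [h | h].
  - rewrite !recolor_at by exact h; split; [tauto | intros h'].
    destruct Hww; exact (eqS1_trans _ _ _ (eqS1_sym _ _ h') h).
  - rewrite !recolor_off by exact h; apply D.
Qed.

Definition candidate (c0 : R -> bool) (a : R) (e1 e3 : bool) : R -> bool :=
  recolor (recolor (recolor (recolor c0 a (negb (c0 (- a)))) 0 (negb (c0 (1/2)))) (3/4) e3) (1/4) e1.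

Ltac simpl_recolor :=
  repeat first [ rewrite recolor_at by (apply eqS1_refl) | rewrite recolor_off by assumption ].

Section Candidates.

Variables (c0 : R -> bool) (a : R).
Hypotheses (Hc0 : on_S1 c0).
Hypotheses (Ha0 : ~ eqS1 a 0) (Ha1 : ~ eqS1 a (1/4)) (Ha2 : ~ eqS1 a (1/2)) (Ha3 : ~ eqS1 a (3/4)).

Lemma candidate_on_S1 e1 e3 : on_S1 (candidate c0 a e1 e3).
Proof. repeat apply recolor_on_S1; exact Hc0. Qed.

Lemma candidate_extends e1 e3 x : ~ W0 a x -> candidate c0 a e1 e3 x = c0 x.
Proof. unfold W0, candidate; intros Hx; rewrite !recolor_off; tauto. Qed.

Lemma candidate_separates e1 e3 : separates a (candidate c0 a e1 e3).
Proof.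
  assert (~ eqS1 0 (1/4)) by (apply (not_eqS1_frac _ _ (3/4) (-1)); simpl; lra).
  assert (~ eqS1 0 (3/4)) by (apply (not_eqS1_frac _ _ (1/4) (-1)); simpl; lra).
  assert (~ eqS1 (1/2) (1/4)) by (apply (not_eqS1_frac _ _ (1/4) 0); simpl; lra).
  assert (~ eqS1 (1/2) (3/4)) by (apply (not_eqS1_frac _ _ (3/4) (-1)); simpl; lra).
  assert (~ eqS1 (1/2) a) by (intros h; exact (Ha2 (eqS1_sym _ _ h))).
  assert (~ eqS1 (- a) (1/4)) by (intros h; apply Ha3; eqS1_from h).
  assert (~ eqS1 (- a) (3/4)) by (intros h; apply Ha1; eqS1_from h).
  assert (~ eqS1 (- a) 0) by (intros h; apply Ha0; eqS1_from h).
  assert (~ eqS1 (- a) a).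
  { intros h; destruct (eqS1_double_0 a ltac:(eqS1_from h)); contradiction. }
  pose proof half_neq_0.
  unfold separates, candidate; simpl_recolor.
  split; [destruct (c0 (1/2)) | destruct (c0 (- a))]; discriminate.
Qed.

Lemma candidate_flip_quarter :
  differ_only_at (candidate c0 a false false) (candidate c0 a true false) (1/4).
Proof. apply differ_only_at_recolor. Qed.

Lemma candidate_flip_three_quarters :
  differ_only_at (candidate c0 a false false) (candidate c0 a false true) (3/4).
Proof.
  apply differ_only_at_recolor_other; [apply differ_only_at_recolor |].
  intros h; apply quarter_neq_three_quarters; eqS1_from h.
Qed.

End Candidates.

Lemma P_W0 a : ~ eqS1 a 0 -> ~ eqS1 a (1/4) -> ~ eqS1 a (1/2) -> ~ eqS1 a (3/4) -> P (W0 a).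
Proof.
  intros Ha0 Ha1 Ha2 Ha3 c0 Hc0.
  assert (Hext : forall e1 e3, distinguishing (candidate c0 a e1 e3) ->
            exists c, on_S1 c /\ distinguishing c /\ forall x, ~ W0 a x -> c x = c0 x).
  { intros e1 e3 D; exists (candidate c0 a e1 e3).
    split; [apply candidate_on_S1, Hc0 | split; [exact D | apply candidate_extends]]. }
  destruct (quarter_flips_distinguishing a (candidate c0 a false false) (candidate c0 a true false)
              (candidate c0 a false true)) as [D | [D | D]];
    try exact (Hext _ _ D);
    first [ apply candidate_on_S1 | apply candidate_separates
          | apply candidate_flip_quarter | apply candidate_flip_three_quarters ]; assumption.
Qed.

Theorem lemma2p4p2 (W : R -> Prop) (a : R) :
  ~ eqS1 a 0 -> ~ eqS1 a (1/4) -> ~ eqS1 a (1/2) -> ~ eqS1 a (3/4) ->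
  congr_sets (W0 a) W ->
  P W.
Proof. intros Ha0 Ha1 Ha2 Ha3 HW; exact (P_congr_sets _ _ HW (P_W0 a Ha0 Ha1 Ha2 Ha3)). Qed.
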